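(* Let $X,Y$ be real-valued random variables on an atomless probability space. Then: (i) if $\mathbb E[Y_+]=\infty$, then $X\le_{\rm cx}Y$ is equivalent to $X\le_{\rm dcx}Y$; (ii) if $\mathbb E[Y_-]=\infty$, then $X\le_{\rm cx}Y$ is equivalent to $X\le_{\rm icx}Y$; (iii) if $\mathbb E[Y_+]=\mathbb E[Y_-]=\infty$, then both $Y\le^\dagger_{\rm cx}X$ and $X\le_{\rm cx}Y$ hold.
   Context: $x_+=\max\{x,0\}$, $x_-=\max\{-x,0\}$. An expectation $\mathbb E[Z]$ is well-defined if $\mathbb E[Z_+]<\infty$ or $\mathbb E[Z_-]<\infty$. $\mathcal U_{\rm cx}$ (resp. $\mathcal U_{\rm icx}$, $\mathcal U_{\rm dcx}$) denotes the set of convex (resp. increasing convex, decreasing convex) functions $\mathbb R\to\mathbb R$. For $*\in\{\rm cx,icx,dcx\}$, $X\le_*Y$ means $\mathbb E[u(X)]\le\mathbb E[u(Y)]$ for all $u\in\mathcal U_*$ such that both expectations are well-defined. $X\le^\dagger_{\rm cx}Y$ means $\mathbb E[u(X)]\le\mathbb E[u(Y)]$ for all $u\in\mathcal U_{\rm cx}$ such that both expectations are finite. *)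

From HB Require Import structures.
From mathcomp Require Import all_boot all_order all_algebra.
From mathcomp Require Import all_classical all_reals all_analysis.
Set Implicit Arguments. Unset Strict Implicit. Unset Printing Implicit Defensive.
Import Order.TTheory GRing.Theory Num.Theory Num.Def.
Local Open Scope classical_set_scope.
Local Open Scope ring_scope.

Section convex_orders.
Context {d : measure_display} {T : measurableType d} {R : realType}.
Variable P : probability T R.

Definition atomless : Prop :=
  forall A : set T, measurable A -> (0 < P A)%E ->
    exists B : set T, [/\ measurable B, B `<=` A & (0 < P B < P A)%E].

Definition pos_part (Z : T -> R) : T -> R := fun w => maxr (Z w) 0.
Definition neg_part (Z : T -> R) : T -> R := fun w => maxr (- Z w) 0.

Definition exp_well_defined (Z : T -> R) : Prop :=
  ('E_P[pos_part Z] < +oo)%E \/ ('E_P[neg_part Z] < +oo)%E.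

Definition exp_finite (Z : T -> R) : Prop :=
  ('E_P[pos_part Z] < +oo)%E /\ ('E_P[neg_part Z] < +oo)%E.

Definition cvx (u : R -> R) : Prop := convex_function (E := R^o) setT u.
Definition incr (u : R -> R) : Prop := {homo u : x y / x <= y}.
Definition decr (u : R -> R) : Prop := {homo u : x y /~ x <= y}.

Definition le_cx (X Y : T -> R) : Prop :=
  forall u : R -> R, cvx u ->
    exp_well_defined (u \o X) -> exp_well_defined (u \o Y) ->
    ('E_P[u \o X] <= 'E_P[u \o Y])%E.
Definition le_icx (X Y : T -> R) : Prop :=
  forall u : R -> R, cvx u -> incr u ->
    exp_well_defined (u \o X) -> exp_well_defined (u \o Y) ->
    ('E_P[u \o X] <= 'E_P[u \o Y])%E.
Definition le_dcx (X Y : T -> R) : Prop :=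
  forall u : R -> R, cvx u -> decr u ->
    exp_well_defined (u \o X) -> exp_well_defined (u \o Y) ->
    ('E_P[u \o X] <= 'E_P[u \o Y])%E.
Definition le_cx_dagger (X Y : T -> R) : Prop :=
  forall u : R -> R, cvx u ->
    exp_finite (u \o X) -> exp_finite (u \o Y) ->
    ('E_P[u \o X] <= 'E_P[u \o Y])%E.
End convex_orders.

From HB Require Import structures.
From mathcomp Require Import all_boot all_order all_algebra.
From mathcomp Require Import all_classical all_reals all_analysis.
From mathcomp Require Import measurable_realfun ring lra.
Set Implicit Arguments.
Unset Strict Implicit.
Import Order.TTheory GRing.Theory Num.Theory Num.Def.
Local Open Scope ring_scope.

(* If a convex [u] is not nonincreasing, it rises
   with some slope [s > 0] between two points, so beyond them it stays above a
   line of slope [s]; hence [E[Y_+] = +oo] forces [E[u(Y)_+] = +oo], and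
   [E[u(Y)]] is [+oo] whenever it is well-defined, making [E[u(X)] <= E[u(Y)]]
   trivial.  So under [E[Y_+] = +oo] only nonincreasing [u] matter, which is
   (i); (ii) is the mirror image through [y |-> -y]; and under both conditions
   only the constant functions matter, which gives (iii). *)

Section convex_real_functions.
Context {R : realType}.
Implicit Types (u : R -> R) (x y z : R).

Lemma cvx_secant_le u x y z : cvx u -> x < y -> y < z ->
  u y + (z - y) * ((u y - u x) / (y - x)) <= u z.
Proof.
move=> cu xy yz.
set t := (z - y) / (z - x).
have t0 : 0 <= t by apply: divr_ge0; lra.
have t1 : t <= 1 by rewrite ler_pdivrMr; lra.
have conv_y : t * x + (1 - t) * z = y by rewrite /t; field; lra.
have uy_le : u (t * x + (1 - t) * z) <= t * u x + (1 - t) * u z.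
  by have := cu (Itv01 t0 t1) x z; rewrite !inE; apply.
rewrite conv_y in uy_le.
rewrite -subr_ge0.
have -> : u z - (u y + (z - y) * ((u y - u x) / (y - x))) =
    (z - x) / (y - x) * (t * u x + (1 - t) * u z - u y).
  by rewrite /t; field; lra.
by apply: mulr_ge0; [apply: divr_ge0; lra | rewrite subr_ge0].
Qed.

Lemma cvx_comp_opp u : cvx u -> cvx (fun z => u (- z)).
Proof. by move=> cu t a b _ _ /=; rewrite convN; apply: cu; rewrite inE. Qed.

Lemma cvx_pos_part_ge_linear u x y : cvx u -> x < y -> u x < u y ->
  exists s C, [/\ 0 < s, 0 <= C & forall v, s * maxr v 0 <= maxr (u v) 0 + C].
Proof.
move=> cu xy uxy; set s := (u y - u x) / (y - x).
have s0 : 0 < s by apply: divr_gt0; lra.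
exists s, (s * (2 * `|y|) + `|u y|); split => //.
  by have := normr_ge0 y; have := normr_ge0 (u y); nra.
move=> v; have py := ler_norm y; have ny : - y <= `|y| by rewrite -normrN ler_norm.
have nuy : - u y <= `|u y| by rewrite -normrN ler_norm.
have y0 := normr_ge0 y; have uy0 := normr_ge0 (u y).
have uv_le : u v <= maxr (u v) 0 by rewrite le_max lexx.
have uv0 : 0 <= maxr (u v) 0 by rewrite le_max lexx orbT.
(* For [v <= y] the constant alone suffices; for [y < v] the secant gives
   [s * v <= u v - u y + s * y]. *)
have [vy|yv] := leP v y.
  have : s * maxr v 0 <= s * (2 * `|y|).
    by rewrite ler_pM2l // ge_max; apply/andP; split; lra.
  lra.
have secant := cvx_secant_le cu xy yv; rewrite -/s in secant.
have sy : s * y <= s * `|y| by rewrite ler_pM2l.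
have : s * maxr v 0 <= s * (v + `|y|).
  by rewrite ler_pM2l // ge_max; apply/andP; split; lra.
lra.
Qed.

Lemma not_decr_lt u : ~ decr u -> exists x y, x < y /\ u x < u y.
Proof.
move=> /existsNP[x /existsNP[y /not_implyP[xy /negP]]]; rewrite -ltNge => uyx.
exists y, x; split => //; rewrite lt_neqAle xy andbT.
by apply: contraTneq uyx => ->; rewrite ltxx.
Qed.

Lemma not_incr_lt u : ~ incr u -> exists x y, x < y /\ u y < u x.
Proof.
move=> /existsNP[x /existsNP[y /not_implyP[xy /negP]]]; rewrite -ltNge => uyx.
exists x, y; split => //; rewrite lt_neqAle xy andbT.
by apply: contraTneq uyx => ->; rewrite ltxx.
Qed.

Lemma incr_decr_cst u : incr u -> decr u -> u = cst (u 0).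
Proof.
move=> iu du; apply/funext => z /=.
by case/orP: (le_total z 0) => h; apply: le_anti; rewrite (iu _ _ h) (du _ _ h).
Qed.

End convex_real_functions.

(* Unlike [ge0_le_integral], no measurability is needed: the integral of a
   nonnegative function is a supremum over its simple minorants. *)
Lemma ge0_le_integralT d (T : measurableType d) (R : realType)
    (mu : {measure set T -> \bar R}) (f g : T -> \bar R) :
  (forall x, (0 <= f x)%E) -> (forall x, (f x <= g x)%E) ->
  (\int[mu]_x f x <= \int[mu]_x g x)%E.
Proof.
move=> f0 fg; rewrite !ge0_integralTE // => [|x]; last exact: le_trans (fg x).
by apply: ereal_sup_le => _ [h hf <-]; exists h => //= x; exact: le_trans (fg x).
Qed.

Section infinite_tails.
Context {d : measure_display} {T : measurableType d} {R : realType}.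
Variable P : probability T R.

Lemma pos_part_ge0 (f : T -> R) w : 0 <= pos_part f w.
Proof. by rewrite le_max lexx orbT. Qed.

Lemma pinfty_pos_part_of_linear_le (f g : T -> R) (s C : R) :
  measurable_fun setT f -> 0 < s -> 0 <= C ->
  (forall w, s * maxr (f w) 0 <= maxr (g w) 0 + C) ->
  ('E_P[pos_part f] = +oo)%E -> ('E_P[pos_part g] = +oo)%E.
Proof.
move=> mf s0 C0 lin; rewrite unlock => Ef.
(* [g] need not be measurable; [h] is a measurable minorant of [g_+] with
   [s * f_+ <= h + C]. *)
pose h w := maxr (s * maxr (f w) 0 - C) 0.
have h0 w : 0 <= h w by rewrite le_max lexx orbT.
have mh : measurable_fun setT h.
  apply: measurable_maxr => //; apply: measurable_funB => //.
  by apply: measurable_funM => //; exact: measurable_maxr.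
have mpf : measurable_fun setT (EFin \o pos_part f).
  by apply/measurable_EFinP; exact: measurable_maxr.
have h_le : (\int[P]_w (h w)%:E <= \int[P]_w (pos_part g w)%:E)%E.
  apply: ge0_le_integralT => w; rewrite lee_fin // ge_max pos_part_ge0 andbT.
  by rewrite lerBlDr lin.
have int_h_pinfty : (+oo <= \int[P]_w (h w)%:E + C%:E)%E.
  have s0E : (0 < s%:E)%E by rewrite lte_fin.
  rewrite -(gt0_muley s0E) -Ef.
  rewrite -ge0_integralZl_EFin ?(ltW s0) // => [|w _]; last exact: pos_part_ge0.
  have -> : C%:E = (\int[P]_w (cst C%:E) w)%E.
    by have := expectation_cst P C; rewrite unlock.
  rewrite -ge0_integralD // => [|w _|]; last 2 first.
  - by rewrite lee_fin.
  - exact/measurable_EFinP.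
  apply: ge0_le_integral => // [w _|||w _].
  - by rewrite -EFinM lee_fin mulr_ge0 ?(ltW s0) ?pos_part_ge0.
  - exact: measurable_funeM.
  - by apply: emeasurable_funD => //; exact/measurable_EFinP.
  - by rewrite -EFinM -EFinD lee_fin -lerBlDr le_max lexx.
have int_h : (\int[P]_w (h w)%:E = +oo)%E.
  by move: int_h_pinfty; rewrite leye_eq; case: (\int[P]_w (h w)%:E)%E.
by apply/eqP; rewrite -leye_eq -int_h.
Qed.

Lemma expectation_pinfty_of_pos_part (g : T -> R) :
  ('E_P[pos_part g] = +oo)%E -> exp_well_defined P g -> ('E_P[g] = +oo)%E.
Proof.
move=> Eg [|]; first by rewrite Eg ltxx.
rewrite unlock in Eg * => Eneg; rewrite integralE.
have -> : (\int[P]_w ((EFin \o g)^\+ w) = \int[P]_w (pos_part g w)%:E)%E.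
  by apply: eq_integral => w _; rewrite funerpos.
have -> : (\int[P]_w ((EFin \o g)^\- w) = \int[P]_w (neg_part g w)%:E)%E.
  by apply: eq_integral => w _; rewrite funerneg.
by rewrite Eg; move: Eneg; case: (\int[P]_w (neg_part g w)%:E)%E.
Qed.

Lemma expectation_comp_incr_decr u (Z : T -> R) : incr u -> decr u ->
  ('E_P[u \o Z] = (u 0)%:E)%E.
Proof. by move=> iu du; rewrite (incr_decr_cst iu du) expectation_cst. Qed.

Section convex_images.
Variable Y : {RV P >-> R}.

Lemma cvx_comp_pos_part_pinfty u : cvx u -> ~ decr u ->
  ('E_P[pos_part Y] = +oo)%E -> ('E_P[pos_part (u \o Y)] = +oo)%E.
Proof.
move=> cu /not_decr_lt[x [y [xy uxy]]].
have [s [C [s0 C0 lin]]] := cvx_pos_part_ge_linear cu xy uxy.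
exact: pinfty_pos_part_of_linear_le (measurable_funPT Y) s0 C0 (fun w => lin (Y w)).
Qed.

Lemma cvx_comp_pos_part_pinfty_neg u : cvx u -> ~ incr u ->
  ('E_P[neg_part Y] = +oo)%E -> ('E_P[pos_part (u \o Y)] = +oo)%E.
Proof.
move=> cu /not_incr_lt[x [y [xy uyx]]].
have [s [C [s0 C0 lin]]] : exists s C, [/\ 0 < s, 0 <= C &
    forall v, s * maxr v 0 <= maxr (u (- v)) 0 + C].
  have nyx : - y < - x by rewrite ltrN2.
  have unyx : u (- - y) < u (- - x) by rewrite !opprK.
  exact: cvx_pos_part_ge_linear (cvx_comp_opp cu) nyx unyx.
apply: pinfty_pos_part_of_linear_le (measurable_funN (measurable_funPT Y)) s0 C0 _.
by move=> w; have := lin (- Y w); rewrite opprK.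
Qed.

Lemma le_cx_le_dcx (X : T -> R) : le_cx P X Y -> le_dcx P X Y.
Proof. by move=> le_XY u cu _; exact: le_XY. Qed.

Lemma le_cx_le_icx (X : T -> R) : le_cx P X Y -> le_icx P X Y.
Proof. by move=> le_XY u cu _; exact: le_XY. Qed.

Lemma le_dcx_le_cx (X : T -> R) :
  ('E_P[pos_part Y] = +oo)%E -> le_dcx P X Y -> le_cx P X Y.
Proof.
move=> EY le_XY u cu wX wY; have [du|ndu] := pselect (decr u); first exact: le_XY.
by rewrite (expectation_pinfty_of_pos_part (cvx_comp_pos_part_pinfty cu ndu EY) wY) leey.
Qed.

Lemma le_icx_le_cx (X : T -> R) :
  ('E_P[neg_part Y] = +oo)%E -> le_icx P X Y -> le_cx P X Y.
Proof.
move=> EY le_XY u cu wX wY; have [iu|niu] := pselect (incr u); first exact: le_XY.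
by rewrite (expectation_pinfty_of_pos_part (cvx_comp_pos_part_pinfty_neg cu niu EY) wY) leey.
Qed.

Lemma le_dcx_of_neg_part_pinfty (X : T -> R) :
  ('E_P[neg_part Y] = +oo)%E -> le_dcx P X Y.
Proof.
move=> EY u cu du _ wY; have [iu|niu] := pselect (incr u).
  by rewrite !expectation_comp_incr_decr.
by rewrite (expectation_pinfty_of_pos_part (cvx_comp_pos_part_pinfty_neg cu niu EY) wY) leey.
Qed.

Lemma le_cx_dagger_of_pinfty (X : T -> R) :
  ('E_P[pos_part Y] = +oo)%E -> ('E_P[neg_part Y] = +oo)%E -> le_cx_dagger P Y X.
Proof.
move=> EYp EYn u cu [finY _] _.
have du : decr u.
  by apply: contrapT => ndu; move: finY; rewrite (cvx_comp_pos_part_pinfty cu ndu EYp).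
have iu : incr u.
  by apply: contrapT => niu; move: finY; rewrite (cvx_comp_pos_part_pinfty_neg cu niu EYn).
by rewrite !expectation_comp_incr_decr.
Qed.

End convex_images.
End infinite_tails.

Theorem lemma1 (d : measure_display) (T : measurableType d) (R : realType)
  (P : probability T R) (X Y : {RV P >-> R}) :
  atomless P ->
  [/\ ('E_P[pos_part Y] = +oo)%E -> (le_cx P X Y <-> le_dcx P X Y),
      ('E_P[neg_part Y] = +oo)%E -> (le_cx P X Y <-> le_icx P X Y) &
      ('E_P[pos_part Y] = +oo)%E -> ('E_P[neg_part Y] = +oo)%E ->
        le_cx_dagger P Y X /\ le_cx P X Y].
Proof.
move=> _; split.
- by move=> EYp; split; [exact: le_cx_le_dcx | exact: le_dcx_le_cx].
- by move=> EYn; split; [exact: le_cx_le_icx | exact: le_icx_le_cx].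
- move=> EYp EYn; split; first exact: le_cx_dagger_of_pinfty.
  exact/(le_dcx_le_cx EYp)/le_dcx_of_neg_part_pinfty.
Qed.
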